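(* Let $k\ge 1$, $n=2^{k+1}$, and run Jakobsson's pebble-update procedure (with its $k+1$ pebbles) for exactly $n/2$ steps. Then every pebble that has not been discarded satisfies $\mathrm{Position}=\mathrm{Destination}$.
   Context: Jakobsson's pebble-update procedure (hash-chain preimage traversal). Fix $K\ge 1$ and $N=2^K$ (in the claim, $N=n$ and $K=k+1$). There are $K$ pebbles, identified by their initial label $j\in\{1,\dots,K\}$. Pebble $j$ has two fixed constants $S_j=3\cdot 2^j$ (start increment) and $D_j=2^{j+1}$ (destination increment), and two integer fields $\mathrm{Position}$ and $\mathrm{Destination}$ (which may be set to $+\infty$). Initially $\mathrm{Position}=\mathrm{Destination}=2^j$ for pebble $j$, and a counter $c$ equals $0$. The pebbles are kept sorted by $\mathrm{Position}$, and ''the first pebble'' means the pebble with the smallest $\mathrm{Position}$. One step: (i) if $c=N$, stop; otherwise $c\leftarrow c+1$; (ii) for every pebble with $\mathrm{Position}\ne\mathrm{Destination}$, set $\mathrm{Position}\leftarrow\mathrm{Position}-2$; (iii) if $c$ is even, the first pebble (say with initial label $j$) makes a backward move: $\mathrm{Position}\leftarrow \mathrm{Position}+S_j$, $\mathrm{Destination}\leftarrow\mathrm{Destination}+D_j$; if the new Destination exceeds $N$, both fields are set to $+\infty$ and the pebble is said to be discarded; then the pebbles are re-sorted by $\mathrm{Position}$. (Each pebble also stores a hash-chain value, which does not influence the evolution of the Position and Destination fields.) *)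

From HB Require Import structures.
From mathcomp Require Import all_boot all_order all_algebra.
Set Implicit Arguments. Unset Strict Implicit. Unset Printing Implicit Defensive.
Import Order.TTheory GRing.Theory Num.Theory.

(* Extended integers: [None] stands for +infinity. *)
Definition xint := option int.

Definition xle (a b : xint) : bool :=
  match a, b with
  | _, None => true
  | None, Some _ => false
  | Some x, Some y => (x <= y)%R
  end.

Definition pebble := (nat * xint * xint)%type.
Definition Pebble (j : nat) (pos dst : xint) : pebble := (j, pos, dst).
Definition label (p : pebble) : nat := p.1.1.
Definition position (p : pebble) : xint := p.1.2.
Definition destination (p : pebble) : xint := p.2.

Definition S_inc (j : nat) : nat := 3 * 2 ^ j.
Definition D_inc (j : nat) : nat := 2 ^ j.+1.

Definition xadd (a : xint) (m : nat) : xint :=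
  match a with None => None | Some x => Some (x + (Posz m))%R end.

Definition sort_pebbles (l : seq pebble) : seq pebble :=
  sort (fun p q => xle (position p) (position q)) l.

Definition advance (p : pebble) : pebble :=
  if position p == destination p then p
  else Pebble (label p)
         (match position p with None => None | Some x => Some (x - 2)%R end)
         (destination p).

Definition backward (N : nat) (p : pebble) : pebble :=
  let j := label p in
  let np := xadd (position p) (S_inc j) in
  let nd := xadd (destination p) (D_inc j) in
  if xle nd (Some (Posz N)) then Pebble j np nd else Pebble j None None.

Definition state := (nat * seq pebble)%type.

Definition init_state (K : nat) : state :=
  (0, [seq Pebble j (Some (Posz (2 ^ j))) (Some (Posz (2 ^ j))) | j <- iota 1 K]).

(* One step of the procedure with N = 2^K. The "first pebble" is the
   pebble of smallest Position; ties (if any) are broken by the current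
   order of the list (stable sort). *)
Definition step (N : nat) (s : state) : state :=
  let: (c, l) := s in
  if c == N then s
  else
    let c' := c.+1 in
    let l1 := sort_pebbles (map advance l) in
    if ~~ odd c' then
      match l1 with
      | [::] => (c', l1)
      | p :: rest => (c', sort_pebbles (backward N p :: rest))
      end
    else (c', l1).

Definition run (K t : nat) : state := iter t (step (2 ^ K)) (init_state K).

Definition discarded (p : pebble) : bool := destination p == None.

From HB Require Import structures.
From mathcomp Require Import all_boot all_order all_algebra.
From mathcomp Require Import zify.
Set Implicit Arguments. Unset Strict Implicit.
Import Order.TTheory GRing.Theory Num.Theory.

(* Write N = 2^K, h = 2^j and B = 2^(j+1).  Pebble j makes
   its backward moves exactly at the counter values c with B | c + h, i.e.
   when the 2-adic valuation of c is j.  Writing t + h = q * B + r with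
   r < B, the state of pebble j after t steps is therefore given by a closed
   form [pebble_state N j q r]: after its q-th backward move its Destination
   is d = q * B + h and, r steps later, its Position is d + (h - 2r)
   (truncated subtraction), unless d > N, in which case it is discarded.
   We first study the move schedule (at every even counter value exactly one
   pebble moves, at odd ones none does), then show that the closed form is
   preserved by one step: idle pebbles advance as predicted and stay strictly
   above the counter, while the mover reaches Position c and is therefore
   the first pebble.  By induction the pebbles after t <= 2^k steps are,
   up to order, the closed forms at time t; at t = 2^k = n/2 every closed form
   is either discarded or at rest, which is the theorem. *)

(* Pebble j moves backward when the counter takes the value c. *)
Definition moves_at (j c : nat) : bool := 2 ^ j.+1 %| c + 2 ^ j.

Lemma moves_at_uniq j j' c : moves_at j c -> moves_at j' c -> j = j'.
Proof.
have no_two a b : a < b -> moves_at a c -> moves_at b c -> False.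
  move=> ab ha hb.
  have dvd_b : 2 ^ a.+1 %| 2 ^ b by rewrite dvdn_exp2l.
  have dvd_c : 2 ^ a.+1 %| c.
    have : 2 ^ a.+1 %| c + 2 ^ b.
      by apply: dvdn_trans hb; rewrite dvdn_exp2l // ltnS ltnW.
    by rewrite dvdn_addl.
  by move: ha; rewrite /moves_at dvdn_addr // dvdn_Pexp2l // ltnn.
move=> h1 h2; case: (ltngtP j j') => // ord.
- by case: (no_two _ _ ord h1 h2).
- by case: (no_two _ _ ord h2 h1).
Qed.

Lemma moves_at_odd j c : 0 < j -> odd c -> ~~ moves_at j c.
Proof.
move=> j_gt0 c_odd; apply/negP.
move=> /(dvdn_trans (dvdn_exp2l 2 (isT : 1 <= j.+1))).
by rewrite expn1 dvdn2 oddD c_odd oddX; case: j j_gt0.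
Qed.

(* At a positive even counter value c <= 2^k the pebble labelled by the
   2-adic valuation of c moves. *)
Lemma moves_at_even c k : 0 < c -> ~~ odd c -> c <= 2 ^ k ->
  exists2 j, 0 < j <= k & moves_at j c.
Proof.
move=> c_gt0 c_even c_le.
have [m m_coprime c_eq] := pfactor_coprime (isT : prime 2) c_gt0.
set j := logn 2 c in c_eq.
have m_odd : odd m by rewrite -coprimen2 coprime_sym.
exists j.
  apply/andP; split.
    case: (posnP j) => // j0; move: c_even.
    by rewrite c_eq j0 muln1 m_odd.
  rewrite -(leq_exp2l _ _ (isT : 1 < 2)); apply: leq_trans c_le.
  by rewrite c_eq leq_pmull //; case: m m_odd {m_coprime c_eq}.
rewrite /moves_at c_eq.
have -> : m * 2 ^ j + 2 ^ j = m.+1./2 * 2 ^ j.+1.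
  rewrite -mulSnr expnS mulnA; congr (_ * _).
  by rewrite -{1}(odd_double_half m.+1) /= m_odd add0n -muln2 mulnC.
by rewrite dvdn_mull.
Qed.

(* Initially q = 0, r = 2^j. *)
Definition pebble_state (N j q r : nat) : pebble :=
  let d := q * 2 ^ j.+1 + 2 ^ j in
  if N < d then Pebble j None None
  else Pebble j (Some (Posz (d + (2 ^ j - 2 * r)))) (Some (Posz d)).

(* The state of pebble j after t steps, where t + 2^j = q * 2^(j+1) + r. *)
Definition pebble_at (N j t : nat) : pebble :=
  pebble_state N j ((t + 2 ^ j) %/ 2 ^ j.+1) ((t + 2 ^ j) %% 2 ^ j.+1).

Lemma pebble_atE N j t q r : t + 2 ^ j = q * 2 ^ j.+1 + r -> r < 2 ^ j.+1 ->
  pebble_at N j t = pebble_state N j q r.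
Proof.
move=> t_eq r_lt; have B_gt0 : 0 < 2 ^ j.+1 by rewrite expn_gt0.
by rewrite /pebble_at t_eq divnMDl // modnMDl divn_small // modn_small // addn0.
Qed.

Lemma advance_rest j x : advance (Pebble j x x) = Pebble j x x.
Proof. by rewrite /advance /= eqxx. Qed.

Lemma advance_moving j X D : X <> D ->
  advance (Pebble j (Some (Posz X)) (Some (Posz D))) =
  Pebble j (Some (Posz X - 2)%R) (Some (Posz D)).
Proof. by move=> X_neq_D; rewrite /advance /=; case: eqP => // -[] /X_neq_D. Qed.

Lemma backwardE N j X D :
  backward N (Pebble j (Some (Posz X)) (Some (Posz D))) =
  if D + 2 ^ j.+1 <= N
  then Pebble j (Some (Posz (X + 3 * 2 ^ j))) (Some (Posz (D + 2 ^ j.+1)))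
  else Pebble j None None.
Proof. by rewrite /backward /= /S_inc /D_inc -!PoszD lez_nat. Qed.

Section ClosedForm.

Variables (N j q r : nat).

Lemma advance_state : 0 < j -> r.+1 < 2 ^ j.+1 ->
  advance (pebble_state N j q r) = pebble_state N j q r.+1.
Proof.
move=> j_gt0; have [a h_eq] : exists a, 2 ^ j = 2 * a.
  by case: j j_gt0 => // i _; exists (2 ^ i); rewrite expnS.
rewrite /pebble_state expnS h_eq => r_lt.
case: ifP => _; first exact: advance_rest.
have [settled | moving] := leqP (2 * a) (2 * r).
  have -> : 2 * a - 2 * r.+1 = 0 by lia.
  have -> : 2 * a - 2 * r = 0 by lia.
  by rewrite addn0 advance_rest.
rewrite advance_moving; last by lia.
by congr (Pebble _ (Some _) _); lia.
Qed.

Lemma state_above t : t + 2 ^ j = q * 2 ^ j.+1 + r -> r < 2 ^ j.+1 ->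
  ~~ xle (position (pebble_state N j q r)) (Some (Posz t)).
Proof.
rewrite /pebble_state expnS => t_eq r_lt.
by case: ifP => //= _; rewrite lez_nat -ltnNge; lia.
Qed.

Lemma backward_state t : t + 2 ^ j = q * 2 ^ j.+1 + r -> r.+1 = 2 ^ j.+1 ->
  t.+1 <= N ->
  position (advance (pebble_state N j q r)) = Some (Posz t.+1) /\
  backward N (advance (pebble_state N j q r)) = pebble_state N j q.+1 0.
Proof.
rewrite /pebble_state !expnS => t_eq r_eq t_le.
have h_gt0 : 0 < 2 ^ j by rewrite expn_gt0.
rewrite ifN; last by rewrite -leqNgt; lia.
have -> : 2 ^ j - 2 * r = 0 by lia.
rewrite addn0 advance_rest backwardE expnS /=.
split; first by congr (Some (Posz _)); lia.
case: leqP => fits; case: leqP => fits' //; try lia.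
by congr (Pebble _ (Some (Posz _)) (Some (Posz _))); lia.
Qed.

Lemma state_at_rest : 2 ^ j <= 2 * r ->
  position (pebble_state N j q r) = destination (pebble_state N j q r).
Proof.
rewrite /pebble_state => r_ge; case: ifP => // _.
have -> : 2 ^ j - 2 * r = 0 by lia.
by rewrite addn0.
Qed.

End ClosedForm.

Lemma moves_at_remainder j t :
  moves_at j t.+1 = (((t + 2 ^ j) %% 2 ^ j.+1).+1 == 2 ^ j.+1).
Proof.
have B_gt0 : 0 < 2 ^ j.+1 by rewrite expn_gt0.
rewrite /moves_at addSn {1}(divn_eq (t + 2 ^ j) (2 ^ j.+1)) -addnS.
rewrite dvdn_addr ?dvdn_mull //; apply/idP/eqP => [dvd_r | ->]; last exact: dvdnn.
by apply/eqP; rewrite eqn_leq ltn_pmod // dvdn_leq.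
Qed.

Lemma pebble_at_above N j t :
  ~~ xle (position (pebble_at N j t)) (Some (Posz t)).
Proof.
rewrite /pebble_at; apply: state_above; first exact: divn_eq.
by rewrite ltn_pmod // expn_gt0.
Qed.

Lemma pebble_at_idle N j t : 0 < j -> ~~ moves_at j t.+1 ->
  advance (pebble_at N j t) = pebble_at N j t.+1.
Proof.
rewrite moves_at_remainder => j_gt0 no_wrap.
have r_lt : ((t + 2 ^ j) %% 2 ^ j.+1).+1 < 2 ^ j.+1.
  by rewrite ltn_neqAle no_wrap ltn_pmod // expn_gt0.
rewrite [RHS](pebble_atE N (q := (t + 2 ^ j) %/ 2 ^ j.+1) _ r_lt).
  exact: advance_state.
by rewrite addSn {1}(divn_eq (t + 2 ^ j) (2 ^ j.+1)) addnS.
Qed.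

Lemma pebble_at_moves N j t : moves_at j t.+1 -> t.+1 <= N ->
  position (advance (pebble_at N j t)) = Some (Posz t.+1) /\
  backward N (advance (pebble_at N j t)) = pebble_at N j t.+1.
Proof.
rewrite moves_at_remainder => /eqP wrap t_le.
have [-> ->] := backward_state (divn_eq (t + 2 ^ j) (2 ^ j.+1)) wrap t_le.
split=> //; rewrite (@pebble_atE _ _ _ ((t + 2 ^ j) %/ 2 ^ j.+1).+1 0) //.
  by rewrite addSn {1}(divn_eq (t + 2 ^ j) (2 ^ j.+1)) -addnS wrap mulSn; lia.
by rewrite expn_gt0.
Qed.

(* After 2^k steps with N = 2^(k+1), every pebble is at rest or discarded:
   pebble k has just been discarded by its backward move at counter 2^k,
   and every other pebble has not moved for at least 2^(j-1) steps. *)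
Lemma pebble_at_half k j : 0 < j <= k.+1 ->
  ~~ discarded (pebble_at (2 ^ k.+1) j (2 ^ k)) ->
  position (pebble_at (2 ^ k.+1) j (2 ^ k)) =
  destination (pebble_at (2 ^ k.+1) j (2 ^ k)).
Proof.
case/andP=> j_gt0 j_le; have h_gt0 : 0 < 2 ^ j by rewrite expn_gt0.
case: (ltngtP j k) => [j_lt | j_gt | ->].
- have [m ->] : exists m, k = j.+1 + m by exists (k - j.+1); rewrite subnKC.
  rewrite (@pebble_atE _ _ _ (2 ^ m) (2 ^ j)); last by rewrite expnS; lia.
    by move=> _; apply: state_at_rest; lia.
  by rewrite expnD mulnC.
- have -> : j = k.+1 by apply/eqP; rewrite eqn_leq j_le.
  rewrite (@pebble_atE _ _ _ 0 (2 ^ k + 2 ^ k.+1)); last by rewrite !expnS; lia.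
    by move=> _; apply: state_at_rest; lia.
  by [].
- rewrite (@pebble_atE _ _ _ 1 0) /pebble_state; last by rewrite expnS; lia.
    by rewrite ifT //; rewrite !expnS; lia.
  by rewrite expnS; lia.
Qed.

Definition config (N K t : nat) : seq pebble :=
  [seq pebble_at N j t | j <- iota 1 K].

Lemma pebble_at_start N j : 2 ^ j <= N ->
  pebble_at N j 0 = Pebble j (Some (Posz (2 ^ j))) (Some (Posz (2 ^ j))).
Proof.
move=> h_le; rewrite (@pebble_atE _ _ _ 0 (2 ^ j)) ?ltn_exp2l //.
rewrite /pebble_state mul0n add0n ltnNge h_le /=.
have -> : 2 ^ j - 2 * 2 ^ j = 0 by lia.
by rewrite addn0.
Qed.

Lemma init_config K : (init_state K).2 = config (2 ^ K) K 0.
Proof.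
apply/esym/eq_in_map => j; rewrite mem_iota => /andP [_ j_lt].
by rewrite pebble_at_start // leq_exp2l // -ltnS -(add1n K).
Qed.

Definition earlier : rel pebble := fun p p' => xle (position p) (position p').

Lemma earlier_total : total earlier.
Proof.
move=> [[j1 [a|]] d1] [[j2 [b|]] d2]; rewrite /earlier //=; exact: le_total.
Qed.

Lemma earlier_trans : transitive earlier.
Proof.
move=> p' p p''; rewrite /earlier.
by case: (position p) => [a|]; case: (position p') => [b|];
  case: (position p'') => [c|] //=; exact: le_trans.
Qed.

Lemma sort_pebbles_head (l : seq pebble) p rest x :
  sort_pebbles l = p :: rest -> x \in l -> earlier p x.
Proof.
move=> sort_eq; rewrite -(mem_sort earlier) -/(sort_pebbles l) sort_eq.
have := sort_sorted earlier_total l; rewrite -/(sort_pebbles l) sort_eq /=.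
move=> /(order_path_min earlier_trans) /allP p_min.
rewrite in_cons => /orP [/eqP -> | /p_min //].
by rewrite /earlier; case: (position p) => //= a; rewrite lexx.
Qed.

Section OneStep.

Variables (N K t : nat) (l : seq pebble).
Hypothesis l_config : perm_eq l (config N K t).

Let labels_pos j : j \in iota 1 K -> 0 < j.
Proof. by rewrite mem_iota => /andP []. Qed.

Lemma advance_config :
  perm_eq (map advance l) [seq advance (pebble_at N j t) | j <- iota 1 K].
Proof. by rewrite map_comp; apply: perm_map. Qed.

Lemma idle_config : (forall j, 0 < j -> ~~ moves_at j t.+1) ->
  [seq advance (pebble_at N j t) | j <- iota 1 K] = config N K t.+1.
Proof.
move=> none_moves; apply/eq_in_map => j /labels_pos j_gt0.
exact: pebble_at_idle (none_moves _ j_gt0).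
Qed.

(* If pebble j0 moves at counter value t + 1 <= N, it is the first pebble
   after step (ii): its Position is t + 1, all others lie above t + 1. *)
Lemma first_is_mover j0 p rest : j0 \in iota 1 K -> moves_at j0 t.+1 ->
  t.+1 <= N -> sort_pebbles (map advance l) = p :: rest ->
  exists2 j, j \in iota 1 K & moves_at j t.+1 /\ p = advance (pebble_at N j t).
Proof.
move=> j0_in j0_moves t_lt sort_eq.
have : p \in [seq advance (pebble_at N j t) | j <- iota 1 K].
  rewrite -(perm_mem advance_config) -(mem_sort earlier) -/(sort_pebbles _).
  by rewrite sort_eq mem_head.
case/mapP=> j j_in p_eq; exists j => //; split=> //.
apply: contraTT (pebble_at_above N j t.+1) => j_idle; rewrite negbK.
rewrite -(pebble_at_idle N (labels_pos j_in) j_idle) -p_eq.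
have [<- _] := pebble_at_moves j0_moves t_lt.
apply: sort_pebbles_head sort_eq _; rewrite (perm_mem advance_config).
exact: map_f.
Qed.

Lemma step_config : t < N ->
  (~~ odd t.+1 -> exists2 j0, j0 \in iota 1 K & moves_at j0 t.+1) ->
  (step N (t, l)).1 = t.+1 /\ perm_eq (step N (t, l)).2 (config N K t.+1).
Proof.
move=> t_lt even_mover; rewrite /step ltn_eqF //.
case: ifP => [t_even | /negbFE t_odd]; last first.
  split=> //; rewrite /sort_pebbles perm_sort -idle_config.
    exact: advance_config.
  by move=> j j_gt0; apply: moves_at_odd.
have [j0 j0_in j0_moves] := even_mover t_even.
have : advance (pebble_at N j0 t) \in sort_pebbles (map advance l).
  by rewrite mem_sort (perm_mem advance_config); apply: map_f.
case sort_eq: (sort_pebbles _) => [//|p rest] _.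
have [j j_in [j_moves p_eq]] := first_is_mover j0_in j0_moves t_lt sort_eq.
split=> //; rewrite /sort_pebbles perm_sort p_eq.
have [_ ->] := pebble_at_moves (N := N) j_moves t_lt.
set I := iota 1 K; have I_split := perm_to_rem j_in.
have rest_advance : perm_eq rest [seq advance (pebble_at N i t) | i <- rem j I].
  have := advance_config; rewrite -(perm_sort earlier) -/(sort_pebbles _) sort_eq.
  rewrite p_eq => /perm_trans/(_ (perm_map _ I_split)).
  by rewrite perm_cons.
have others_idle : [seq advance (pebble_at N i t) | i <- rem j I] =
                   [seq pebble_at N i t.+1 | i <- rem j I].
  apply/eq_in_map => i; rewrite mem_rem_uniq ?iota_uniq // inE => /andP [i_neq i_in].
  apply: pebble_at_idle (labels_pos i_in) _; apply: contra i_neq => i_moves.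
  by rewrite (moves_at_uniq i_moves j_moves).
apply: (perm_trans (y := [seq pebble_at N i t.+1 | i <- j :: rem j I])).
  by rewrite /= perm_cons -others_idle.
by rewrite perm_sym; apply: perm_map.
Qed.

End OneStep.

Lemma run_config k t : t <= 2 ^ k ->
  (run k.+1 t).1 = t /\ perm_eq (run k.+1 t).2 (config (2 ^ k.+1) k.+1 t).
Proof.
elim: t => [|t IH] t_le; first by split=> //; rewrite -init_config; exact: perm_refl.
rewrite /run iterS -/(run k.+1 t).
have [] := IH (ltnW t_le); case: (run k.+1 t) => c l /= -> l_config.
apply: step_config l_config _ _; first by rewrite expnS; lia.
move=> t_even.
have [j /andP [j_gt0 j_le] j_moves] := moves_at_even (ltn0Sn t) t_even t_le.
by exists j; rewrite // mem_iota; lia.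
Qed.

Theorem corollary1 (k : nat) : 1 <= k ->
  let n := 2 ^ k.+1 in
  forall p : pebble, p \in (run k.+1 (n %/ 2)).2 ->
    ~~ discarded p -> position p = destination p.
Proof.
move=> _ n p; have -> : n %/ 2 = 2 ^ k by rewrite /n expnS mulKn.
have [_ run_perm] := run_config (leqnn (2 ^ k)).
rewrite (perm_mem run_perm) => /mapP [j j_in ->].
by apply: pebble_at_half; move: j_in; rewrite mem_iota; lia.
Qed.
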